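(* Let $G$ be the general event structure with events $\{a,b,c,d,e\}$, in which a finite set is consistent iff it does not contain both $a$ and $b$, and whose enabling relation is the least one (closed under consistent supersets of the left-hand side) with $\emptyset\vdash a$, $\emptyset\vdash b$, $\emptyset\vdash c$, $\emptyset\vdash d$, $\{b,c\}\vdash e$ and $\{d\}\vdash e$. Let $\mathcal H=\{x\setminus\{b\}\mid x\text{ a configuration of }G\}$. Then there is no general event structure with event set $\{a,c,d,e\}$ whose set of configurations is exactly $\mathcal H$.
   Context: A general event structure is $(E,\mathrm{Con},\vdash)$ with $\mathrm{Con}$ a nonempty subset-closed family of finite subsets of $E$ and $\vdash\subseteq\mathrm{Con}\times E$ such that $Y\in\mathrm{Con}$, $X\subseteq Y$, $X\vdash e$ imply $Y\vdash e$. A configuration is a subset $x\subseteq E$ that is consistent (all finite subsets in $\mathrm{Con}$) and secured (for each $e\in x$ there are $e_1,\dots,e_n\in x$ with $e_n=e$ and $\{e_1,\dots,e_{i-1}\}\vdash e_i$ for every $i\le n$). *)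

From HB Require Import structures.
From mathcomp Require Import all_boot.
Set Implicit Arguments. Unset Strict Implicit. Unset Printing Implicit Defensive.

Definition is_ges (E : finType) (con : {set E} -> Prop)
  (enab : {set E} -> E -> Prop) : Prop :=
  [/\ (exists X, con X),
      (forall X Y : {set E}, con Y -> X \subset Y -> con X),
      (forall X e, enab X e -> con X) &
      (forall (X Y : {set E}) e, con Y -> X \subset Y -> enab X e -> enab Y e)].

Definition consistent (E : finType) (con : {set E} -> Prop) (x : {set E}) :=
  forall y : {set E}, y \subset x -> con y.

(* x is secured: every e in x has a securing chain e_1,...,e_n = e in x with
   {e_1,...,e_(i-1)} |- e_i. The chain is written  rcons s e. *)
Definition secured (E : finType) (enab : {set E} -> E -> Prop) (x : {set E}) :=
  forall e, e \in x -> exists s : seq E,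
    all (fun y => y \in x) (rcons s e) /\
    forall i, i < size (rcons s e) ->
      enab [set y | y \in take i (rcons s e)] (nth e (rcons s e) i).

Definition configuration (E : finType) (con : {set E} -> Prop)
  (enab : {set E} -> E -> Prop) (x : {set E}) :=
  consistent con x /\ secured enab x.

Inductive ev5 := ea | eb | ec | ed | ee.

Definition ev5_to (x : ev5) : 'I_5 :=
  match x with ea => inord 0 | eb => inord 1 | ec => inord 2
             | ed => inord 3 | ee => inord 4 end.
Definition ev5_of (i : 'I_5) : ev5 :=
  match val i with 0 => ea | 1 => eb | 2 => ec | 3 => ed | _ => ee end.
Lemma ev5_toK : cancel ev5_to ev5_of.
Proof. by case; rewrite /ev5_of /= inordK. Qed.
HB.instance Definition _ := Finite.copy ev5 (can_type ev5_toK).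

Definition G_con (X : {set ev5}) : Prop := ~ ((ea \in X) /\ (eb \in X)).

Definition G_gen (Y : {set ev5}) (x : ev5) : Prop :=
  (Y = set0 /\ x = ea) \/ (Y = set0 /\ x = eb) \/ (Y = set0 /\ x = ec) \/
  (Y = set0 /\ x = ed) \/ (Y = [set eb; ec] /\ x = ee) \/ (Y = [set ed] /\ x = ee).

(* least enabling relation containing the generators and closed under
   consistent supersets of the left-hand side *)
Definition G_enab (X : {set ev5}) (x : ev5) : Prop :=
  G_con X /\ exists Y : {set ev5}, Y \subset X /\ G_gen Y x.

Inductive ev4 := fa | fc | fd | fe.

Definition ev4_to (x : ev4) : 'I_4 :=
  match x with fa => inord 0 | fc => inord 1 | fd => inord 2 | fe => inord 3 end.
Definition ev4_of (i : 'I_4) : ev4 :=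
  match val i with 0 => fa | 1 => fc | 2 => fd | _ => fe end.
Lemma ev4_toK : cancel ev4_to ev4_of.
Proof. by case; rewrite /ev4_of /= inordK. Qed.
HB.instance Definition _ := Finite.copy ev4 (can_type ev4_toK).

Definition ev4_in (x : ev4) : ev5 :=
  match x with fa => ea | fc => ec | fd => ed | fe => ee end.

Definition inH (y : {set ev5}) : Prop :=
  exists x : {set ev5}, configuration G_con G_enab x /\ y = x :\ eb.

From HB Require Import structures.
From mathcomp Require Import all_boot.

Set Implicit Arguments.
Unset Strict Implicit.
Unset Printing Implicit Defensive.

(* Configurations of any general event structure that lie inside a common
   configuration have a configuration as their union: securing chains of the
   parts secure the union, and consistency passes to subsets.  In [G] the sets
   [{a}] and [{c,e}] (from the configuration [{b,c,e}]) lie in [H] and inside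
   [{a,c,d,e}], which is in [H] too; but their union [{a,c,e}] is not in [H],
   because [e] needs [d] or [b] in [G], and [b] conflicts with [a]. *)

Section Securing.

Variables (E : finType) (enab : {set E} -> E -> Prop).

Fixpoint enabling_seq (X : {set E}) (s : seq E) : Prop :=
  if s is e :: s' then enab X e /\ enabling_seq (e |: X) s' else True.

Lemma enabling_seq_nth X s x0 i : enabling_seq X s -> i < size s ->
  enab (X :|: [set y | y \in take i s]) (nth x0 s i).
Proof.
elim: s X i => [//|e s IHs] X [|i] /= [eX es] lt_i_s.
  suff -> : X :|: [set y : E | y \in [::]] = X by [].
  by apply/setP => y; rewrite !inE orbF.
have -> : X :|: [set y | y \in e :: take i s] = e |: X :|: [set y | y \in take i s].
  by apply/setP => y; rewrite !inE orbA (orbC (y \in X)).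
exact: IHs.
Qed.

Lemma secured_enabling_seq s :
  enabling_seq set0 s -> secured enab [set y | y \in s].
Proof.
move=> es e; rewrite inE => e_s; set k := index e s.
have lt_k_s : k < size s by rewrite index_mem.
have chain_take : rcons (take k s) e = take k.+1 s by rewrite (take_nth e lt_k_s) nth_index.
exists (take k s); rewrite chain_take; split.
  by apply/allP => y /mem_take; rewrite inE.
rewrite size_takel // => i lt_i_k.
rewrite take_takel ?(ltnW lt_i_k) // nth_take //.
by rewrite -[[set y | _]]set0U; apply: enabling_seq_nth; rewrite // (leq_trans lt_i_k).
Qed.

Lemma secured_setU x y : secured enab x -> secured enab y -> secured enab (x :|: y).
Proof.
move=> sx sy e; rewrite inE => /orP[/sx | /sy] [s [s_sub s_enab]];
  by exists s; split=> //; apply: sub_all s_sub => z; rewrite inE => ->; rewrite ?orbT.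
Qed.

Lemma secured_enabled x e : secured enab x -> e \in x ->
  exists2 X : {set E}, X \subset x & enab X e.
Proof.
move=> sx /sx [s [s_sub s_enab]]; exists [set y | y \in s].
  by apply/subsetP => y; rewrite inE => y_s; apply: (allP s_sub); rewrite mem_rcons inE y_s orbT.
have := s_enab (size s); rewrite size_rcons nth_rcons ltnn eqxx -cats1 take_size_cat //.
by apply; rewrite ltnSn.
Qed.

End Securing.

Lemma consistent_subset (E : finType) (con : {set E} -> Prop) (x y : {set E}) :
  consistent con y -> x \subset y -> consistent con x.
Proof. by move=> cy sub_xy z sub_zx; apply/cy/(subset_trans sub_zx). Qed.

Lemma configuration_setU (E : finType) con enab (x y z : {set E}) :
  configuration con enab z -> configuration con enab x -> configuration con enab y ->
  x :|: y \subset z -> configuration con enab (x :|: y).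
Proof.
move=> [cz _] [_ sx] [_ sy] sub_z.
by split; [exact: consistent_subset cz sub_z | exact: secured_setU].
Qed.

(* Equality on [ev5] is inherited through [inord] and does not compute;
   comparing these codes does. *)
Definition ev5_nat (x : ev5) : nat :=
  match x with ea => 0 | eb => 1 | ec => 2 | ed => 3 | ee => 4 end.

Lemma eq_ev5E (x y : ev5) : (x == y) = (ev5_nat x == ev5_nat y).
Proof. by rewrite inj_eq //; case; case. Qed.

Lemma G_conP X : reflect (G_con X) (~~ ((ea \in X) && (eb \in X))).
Proof. by apply: (iffP idP) => [/andP nab [a b] | nab]; [apply: nab | apply/andP]. Qed.

Lemma G_enabP X x : reflect (G_enab X x)
  (~~ ((ea \in X) && (eb \in X)) && [|| x != ee, (eb \in X) && (ec \in X) | ed \in X]).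
Proof.
apply: (iffP andP) => [[/G_conP cX en] | [cX [Y [sub_Y gen]]]].
  split=> //; have [x_ee | x_ne] := eqVneq x ee; last first.
    exists set0; split; first exact: sub0set.
    by case: x x_ne {en}; rewrite ?eqxx // /G_gen => _; tauto.
  move: en; rewrite x_ee eqxx /= => /orP[/andP[b c] | d].
    exists [set eb; ec]; split; first by rewrite subUset !sub1set b c.
    by rewrite /G_gen; tauto.
  exists [set ed]; split; first by rewrite sub1set d.
  by rewrite /G_gen; tauto.
split; first exact/G_conP.
move: sub_Y; case: gen => [|[|[|[|[|]]]]] [-> ->]; rewrite ?eq_ev5E //.
  by rewrite subUset !sub1set => /andP[-> ->]; rewrite orbT.
by rewrite sub1set => ->; rewrite !orbT.
Qed.

Lemma G_consistent (x : {set ev5}) : ~~ ((ea \in x) && (eb \in x)) -> consistent G_con x.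
Proof.
move=> nab y /subsetP sub_y; apply/G_conP; apply: contra nab => /andP[a b].
by rewrite (sub_y _ a) (sub_y _ b).
Qed.

Lemma G_configuration (s : seq ev5) : ~~ ((ea \in s) && (eb \in s)) ->
  enabling_seq G_enab set0 s -> configuration G_con G_enab [set y | y \in s].
Proof.
move=> nab es; split; last exact: secured_enabling_seq.
by apply: G_consistent; rewrite !inE.
Qed.

Lemma inH_acde : inH [set ea; ec; ed; ee].
Proof.
exists [set y | y \in [:: ea; ec; ed; ee]]; split.
  apply: G_configuration; first by rewrite !inE !eq_ev5E.
  by do ![by apply/G_enabP; rewrite !inE !eq_ev5E | split].
by apply/setP; case; rewrite !inE !eq_ev5E.
Qed.

Lemma inH_ce : inH [set ec; ee].
Proof.
exists [set y | y \in [:: eb; ec; ee]]; split.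
  apply: G_configuration; first by rewrite !inE !eq_ev5E.
  by do ![by apply/G_enabP; rewrite !inE !eq_ev5E | split].
by apply/setP; case; rewrite !inE !eq_ev5E.
Qed.

Lemma inH_a : inH [set ea].
Proof.
exists [set y | y \in [:: ea]]; split.
  apply: G_configuration; first by rewrite !inE !eq_ev5E.
  by do ![by apply/G_enabP; rewrite !inE !eq_ev5E | split].
by apply/setP; case; rewrite !inE !eq_ev5E.
Qed.

Lemma notinH_ace : ~ inH [set ea; ec; ee].
Proof.
move=> [x [[cx sx] def_x]].
have in_x y : y \in [set ea; ec; ee] = (y != eb) && (y \in x) by rewrite def_x in_setD1.
have /andP[_ a_x] : (ea != eb) && (ea \in x) by rewrite -in_x !inE eqxx.
have /andP[_ e_x] : (ee != eb) && (ee \in x) by rewrite -in_x !inE eqxx !orbT.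
have [X /subsetP sub_X /G_enabP] := secured_enabled sx e_x.
rewrite eqxx /= => /andP[_ /orP[/andP[/sub_X b_x _] | /sub_X d_x]].
  have := cx [set ea; eb]; rewrite subUset !sub1set a_x b_x => /(_ isT).
  by apply; split; rewrite !inE eqxx ?orbT.
by have := in_x ed; rewrite d_x !inE !eq_ev5E.
Qed.

Theorem mainTheorem10 :
  ~ exists (con : {set ev4} -> Prop) (enab : {set ev4} -> ev4 -> Prop),
      is_ges con enab /\
      forall x : {set ev4},
        configuration con enab x <-> inH (ev4_in @: x).
Proof.
move=> [con [enab [_ cfgE]]].
have acde : configuration con enab [set fa; fc; fd; fe].
  by apply/cfgE; rewrite !imsetU !imset_set1; exact: inH_acde.
have a : configuration con enab [set fa].
  by apply/cfgE; rewrite imset_set1; exact: inH_a.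
have ce : configuration con enab [set fc; fe].
  by apply/cfgE; rewrite imsetU !imset_set1; exact: inH_ce.
have sub_acde : [set fa] :|: [set fc; fe] \subset [set fa; fc; fd; fe].
  by rewrite !subUset !sub1set !inE !eqxx !orbT.
apply: notinH_ace; have /cfgE := configuration_setU acde a ce sub_acde.
by rewrite setUA !imsetU !imset_set1.
Qed.
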